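(* Let $p\ge q\ge d+1$ be positive integers. Let $\mathcal F$ be an infinite family of closed convex sets in $\mathbb R^d$ satisfying the $(d+1,d+1)$-property, and let $\mathcal B$ be a $(q-d)$-free family of $p-d$ convex sets in $\mathbb R^d$. If $\mathcal F\cup\mathcal B$ satisfies the $(p,q)$-property, then $\pi(\mathcal F)=1$, i.e., all members of $\mathcal F$ have a common point.
   Context: A family of at least $p$ sets satisfies the $(p,q)$-property if among any $p$ of its members there are $q$ with a common point. A family of convex sets in $\mathbb R^d$ is $m$-free if all its members are compact and no $m+1$ of its members have a common point. $\pi(\mathcal F)$ denotes the minimum number of points needed to meet every member of $\mathcal F$. *)

From Stdlib Require Fin.
From Stdlib Require Import Reals List.
Import ListNotations.
Open Scope R_scope.

Definition point (d : nat) : Type := Fin.t d -> R.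

Definition pset (d : nat) : Type := point d -> Prop.
Definition pfamily (d : nat) : Type := pset d -> Prop.

Definition convex {d : nat} (S : pset d) : Prop :=
  forall (x y : point d) (t : R), S x -> S y -> 0 <= t <= 1 ->
    S (fun i => t * x i + (1 - t) * y i).

(* Closedness: closed under limits of (coordinatewise, equivalently
   Euclidean) convergent sequences. *)
Definition closed {d : nat} (S : pset d) : Prop :=
  forall (u : nat -> point d) (x : point d),
    (forall n, S (u n)) -> (forall i, Un_cv (fun n => u n i) (x i)) -> S x.

Definition bounded {d : nat} (S : pset d) : Prop :=
  exists M : R, forall x, S x -> forall i, Rabs (x i) <= M.

(* Compact in R^d = closed and bounded (Heine-Borel). *)
Definition compact {d : nat} (S : pset d) : Prop := closed S /\ bounded S.

Definition members {d : nat} (G : pfamily d) (L : list (pset d)) : Prop :=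
  NoDup L /\ forall S, In S L -> G S.

Definition common_point {d : nat} (L : list (pset d)) : Prop :=
  exists x : point d, forall S, In S L -> S x.

Definition at_least {d : nat} (n : nat) (G : pfamily d) : Prop :=
  exists L, members G L /\ length L = n.

Definition has_card {d : nat} (n : nat) (G : pfamily d) : Prop :=
  exists L, NoDup L /\ length L = n /\ forall S, G S <-> In S L.

Definition infinite_family {d : nat} (G : pfamily d) : Prop :=
  ~ exists L : list (pset d), forall S, G S -> In S L.

Definition pq_property {d : nat} (p q : nat) (G : pfamily d) : Prop :=
  at_least p G /\
  forall L, members G L -> length L = p ->
    exists L', NoDup L' /\ length L' = q /\ incl L' L /\ common_point L'.

Definition m_free {d : nat} (m : nat) (G : pfamily d) : Prop :=
  (forall S, G S -> convex S /\ compact S) /\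
  forall L, members G L -> length L = (m + 1)%nat -> ~ common_point L.

Definition family_union {d : nat} (F B : pfamily d) : pfamily d :=
  fun S => F S \/ B S.

(* Given d members of F, the (p,q)-property applied to them
   together with the p-d members of B yields q members with a common point; as B is
   (q-d)-free, at most q-d of them lie in B, so that point lies in all d members of F and
   in a member of B, hence in a fixed box containing every member of B.  Helly's theorem,
   applied to the box and a finite subfamily of F, then shows that every finite subfamily
   of F meets inside the box, and compactness of the box gives a point common to all of F.
   Compactness is used one coordinate at a time: each coordinate is fixed to a supremum
   that every finite subfamily can realise, by closedness (minima are attained) and
   convexity. *)

From Pilot Require Import Defs.
From Stdlib Require Import Reals List.
From Stdlib Require Import Wf_nat Permutation Lia Lra Classical ClassicalEpsilon FunctionalExtensionality.
Import ListNotations.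
Open Scope R_scope.

Definition classic_eq_dec {A : Type} (x y : A) : {x = y} + {x <> y} :=
  excluded_middle_informative (x = y).

(** * Radon's and Helly's theorems *)

Definition lsum {A : Type} (idx : list A) (f : A -> R) : R :=
  fold_right (fun k acc => f k + acc) 0 idx.

Section ListSums.
Context {A : Type}.
Implicit Types (idx : list A) (f g w : A -> R).

Lemma lsum_perm idx idx' f : Permutation idx idx' -> lsum idx f = lsum idx' f.
Proof. induction 1; simpl; lra. Qed.

Lemma lsum_ext idx f g : (forall k, In k idx -> f k = g k) -> lsum idx f = lsum idx g.
Proof.
  induction idx as [|k idx IH]; simpl; intros H; auto.
  rewrite H, IH; auto.
Qed.

Lemma lsum_zero idx : lsum idx (fun _ => 0) = 0.
Proof. induction idx; simpl; lra. Qed.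

Lemma lsum_minus idx f g : lsum idx (fun k => f k - g k) = lsum idx f - lsum idx g.
Proof. induction idx; simpl; lra. Qed.

Lemma lsum_scal idx a f : lsum idx (fun k => a * f k) = a * lsum idx f.
Proof. induction idx as [|k idx IH]; simpl; [ring|]. rewrite IH. ring. Qed.

Lemma lsum_nonneg idx f : (forall k, In k idx -> 0 <= f k) -> 0 <= lsum idx f.
Proof.
  induction idx as [|k idx IH]; simpl; intros H; [lra|].
  pose proof (H k (or_introl eq_refl)). pose proof (IH (fun k' h => H k' (or_intror h))). lra.
Qed.

Lemma lsum_eq0_nonneg idx f : (forall k, In k idx -> 0 <= f k) -> lsum idx f = 0 ->
  forall k, In k idx -> f k = 0.
Proof.
  induction idx as [|k0 idx IH]; simpl; intros H Hs k Hk; [contradiction|].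
  pose proof (H k0 (or_introl eq_refl)).
  pose proof (lsum_nonneg idx f (fun k' h => H k' (or_intror h))).
  destruct Hk as [<-|Hk]; [lra|].
  apply IH; auto. lra.
Qed.

End ListSums.

(* Gaussian elimination of the unknown [k0] by means of the equation [e]. *)
Lemma homogeneous_system_eliminate {A : Type} (e : A -> R) (eqs : list (A -> R))
    (k0 : A) (idx : list A) (c' : A -> R) :
  e k0 <> 0 -> ~ In k0 idx ->
  (forall r, In r eqs -> lsum idx (fun k => (r k - r k0 / e k0 * e k) * c' k) = 0) ->
  exists c : A -> R, (forall k, In k idx -> c k = c' k) /\
    forall r, In r (e :: eqs) -> lsum (k0 :: idx) (fun k => r k * c k) = 0.
Proof.
  intros Hek0 Hnin Hc'.
  set (s := lsum idx (fun k => e k * c' k)).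
  set (c := fun k => if classic_eq_dec k k0 then - s / e k0 else c' k).
  assert (Hcc' : forall k, In k idx -> c k = c' k).
  { intros k Hk. unfold c. destruct (classic_eq_dec k k0); [subst; contradiction|auto]. }
  assert (Hc : forall r : A -> R,
    lsum (k0 :: idx) (fun k => r k * c k) = r k0 * (- s / e k0) + lsum idx (fun k => r k * c' k)).
  { intros r. simpl. unfold c at 1. destruct (classic_eq_dec k0 k0) as [_|]; [|congruence].
    f_equal. apply lsum_ext. intros k Hk. rewrite Hcc'; auto. }
  exists c. split; auto.
  intros r [<-|Hr]; rewrite Hc.
  - fold s. field. auto.
  - pose proof (Hc' r Hr) as H0.
    rewrite (lsum_ext idx _ (fun k => r k * c' k - r k0 / e k0 * (e k * c' k))) in H0 by (intros; ring).
    rewrite lsum_minus, lsum_scal in H0. fold s in H0.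
    replace (lsum idx (fun k => r k * c' k)) with (r k0 / e k0 * s) by lra.
    field. auto.
Qed.

Lemma homogeneous_system_nontrivial {A : Type} (eqs : list (A -> R)) (idx : list A) :
  NoDup idx -> (length eqs < length idx)%nat ->
  exists c : A -> R, (exists k, In k idx /\ c k <> 0) /\
    forall e, In e eqs -> lsum idx (fun k => e k * c k) = 0.
Proof.
  remember (length eqs) as n eqn:Hn. revert eqs idx Hn.
  induction n as [|n IH]; intros [|e eqs] idx Hn Hnd Hlen; simpl in Hn; try lia.
  - destruct idx as [|k0 idx]; simpl in Hlen; [lia|].
    exists (fun _ => 1). split; [exists k0; split; [left|]; auto; lra|intros e []].
  - injection Hn as Hn.
    destruct (classic (exists k0, In k0 idx /\ e k0 <> 0)) as [[k0 [Hk0 Hek0]]|He0].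
    + destruct (in_split _ _ Hk0) as [l1 [l2 ->]].
      assert (Hperm : Permutation (l1 ++ k0 :: l2) (k0 :: l1 ++ l2))
        by apply Permutation_sym, Permutation_middle.
      destruct (IH (map (fun r k => r k - r k0 / e k0 * e k) eqs) (l1 ++ l2))
        as [c' [[k1 [Hk1 Hc'k1]] Hc']].
      { rewrite length_map. auto. }
      { eapply NoDup_remove_1; eauto. }
      { rewrite (Permutation_length Hperm) in Hlen. simpl in Hlen. lia. }
      destruct (homogeneous_system_eliminate e eqs k0 (l1 ++ l2) c') as [c [Hcc' Hc]]; auto.
      { eapply NoDup_remove_2; eauto. }
      { intros r Hr. apply (Hc' _ (in_map (fun r k => r k - r k0 / e k0 * e k) _ _ Hr)). }
      exists c. split.
      * exists k1. split; [apply (Permutation_in _ (Permutation_sym Hperm)); right; auto|].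
        rewrite Hcc'; auto.
      * intros r Hr. rewrite (lsum_perm _ _ _ Hperm). auto.
    + destruct (IH eqs idx Hn Hnd) as [c [Hnt Hc]]; [lia|].
      exists c. split; auto.
      intros r [<-|Hr]; auto.
      rewrite <- (lsum_zero idx). apply lsum_ext. intros k Hk.
      destruct (Req_dec (e k) 0) as [->|Hne]; [ring|].
      exfalso; eauto.
Qed.

Lemma convex_comb2 {d : nat} (S : pset d) (x y : point d) (a b : R) :
  convex S -> 0 <= a -> 0 <= b -> 0 < a + b -> (0 < a -> S x) -> (0 < b -> S y) ->
  S (fun i => (a * x i + b * y i) / (a + b)).
Proof.
  intros Hc Ha Hb Hab Hx Hy.
  destruct (Req_dec a 0) as [Ha0|Ha0]; [|destruct (Req_dec b 0) as [Hb0|Hb0]].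
  - replace (fun i => (a * x i + b * y i) / (a + b)) with y; [apply Hy; lra|].
    apply functional_extensionality; intros i. subst a. field. lra.
  - replace (fun i => (a * x i + b * y i) / (a + b)) with x; [apply Hx; lra|].
    apply functional_extensionality; intros i. subst b. field. lra.
  - replace (fun i => (a * x i + b * y i) / (a + b))
      with (fun i => a / (a + b) * x i + (1 - a / (a + b)) * y i)
      by (apply functional_extensionality; intros i; field; lra).
    apply Hc; [apply Hx; lra|apply Hy; lra|].
    split; [apply Rmult_le_pos; [lra|left; apply Rinv_0_lt_compat; lra]|].
    apply Rmult_le_reg_r with (a + b); [lra|]. field_simplify; lra.
Qed.

Lemma convex_lsum_comb {A : Type} {d : nat} (S : pset d) (idx : list A) (w : A -> R) (x : A -> point d) :
  convex S -> (forall k, In k idx -> 0 <= w k) -> (forall k, In k idx -> 0 < w k -> S (x k)) ->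
  0 < lsum idx w -> S (fun i => lsum idx (fun k => w k * x k i) / lsum idx w).
Proof.
  intros Hc. induction idx as [|k idx IH]; intros Hw Hx Hpos; simpl in Hpos |- *; [lra|].
  set (T := lsum idx w).
  set (y := fun i => lsum idx (fun k' => w k' * x k' i) / T).
  assert (HwT : forall k', In k' idx -> 0 <= w k') by auto with datatypes.
  assert (HT : 0 <= T) by (apply lsum_nonneg; auto).
  assert (Hy : forall i, lsum idx (fun k' => w k' * x k' i) = T * y i).
  { intros i. destruct (Req_dec T 0) as [HT0|HT0].
    - rewrite HT0, Rmult_0_l, <- (lsum_zero idx). apply lsum_ext. intros k' Hk'.
      rewrite (lsum_eq0_nonneg idx w HwT HT0 k' Hk'). ring.
    - unfold y. field. auto. }
  replace (fun i => (w k * x k i + lsum idx (fun k' => w k' * x k' i)) / (w k + T))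
    with (fun i => (w k * x k i + T * y i) / (w k + T))
    by (apply functional_extensionality; intros i; rewrite Hy; reflexivity).
  apply convex_comb2; auto with datatypes.
Qed.

Fixpoint allfin (n : nat) : list (Fin.t n) :=
  match n with
  | O => []
  | S m => Fin.F1 :: map Fin.FS (allfin m)
  end.

Lemma allfin_In n (i : Fin.t n) : In i (allfin n).
Proof. induction i; simpl; [left; auto|right]. apply in_map; auto. Qed.

Lemma allfin_length n : length (allfin n) = n.
Proof. induction n; simpl; auto. rewrite length_map; auto. Qed.

Lemma Rmax_sign_parts (r : R) : r = Rmax r 0 - Rmax (- r) 0.
Proof. unfold Rmax. destruct (Rle_dec r 0), (Rle_dec (- r) 0); lra. Qed.

Lemma lsum_sign_parts {A : Type} (idx : list A) (c g : A -> R) :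
  lsum idx (fun k => g k * c k) = 0 ->
  lsum idx (fun k => Rmax (c k) 0 * g k) = lsum idx (fun k => Rmax (- c k) 0 * g k).
Proof.
  intros H.
  rewrite (lsum_ext idx _ (fun k => Rmax (c k) 0 * g k - Rmax (- c k) 0 * g k)) in H.
  - rewrite lsum_minus in H. lra.
  - intros k _. rewrite (Rmax_sign_parts (c k)) at 1. ring.
Qed.

Lemma radon {A : Type} {d : nat} (idx : list A) (x : A -> point d) :
  NoDup idx -> (d + 1 < length idx)%nat ->
  exists (P : A -> Prop) (y : point d), forall S : pset d, convex S ->
    (forall k, In k idx -> P k -> S (x k)) \/ (forall k, In k idx -> ~ P k -> S (x k)) -> S y.
Proof.
  intros Hnd Hlen.
  destruct (homogeneous_system_nontrivial ((fun _ => 1) :: map (fun i k => x k i) (allfin d)) idx Hnd)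
    as [c [[k0 [Hk0 Hck0]] Hc]].
  { simpl. rewrite length_map, allfin_length. lia. }
  set (wp := fun k => Rmax (c k) 0). set (wn := fun k => Rmax (- c k) 0).
  assert (Hwp : forall k, In k idx -> 0 <= wp k) by (intros; apply Rmax_r).
  assert (Hwn : forall k, In k idx -> 0 <= wn k) by (intros; apply Rmax_r).
  assert (Hs : lsum idx wp = lsum idx wn).
  { rewrite (lsum_ext idx wp (fun k => Rmax (c k) 0 * 1)), (lsum_ext idx wn (fun k => Rmax (- c k) 0 * 1))
      by (intros; unfold wp, wn; ring).
    apply (lsum_sign_parts idx c (fun _ => 1)), Hc. left; reflexivity. }
  assert (Hsx : forall i, lsum idx (fun k => wp k * x k i) = lsum idx (fun k => wn k * x k i)).
  { intros i. apply lsum_sign_parts, Hc. right. apply (in_map (fun i k => x k i)), allfin_In. }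
  assert (Hpos : 0 < lsum idx wp).
  { destruct (Rle_lt_dec (lsum idx wp) 0) as [Hle|]; auto. exfalso.
    assert (H0 : lsum idx wp = 0) by (pose proof (lsum_nonneg idx wp Hwp); lra).
    pose proof (lsum_eq0_nonneg idx wp Hwp H0 k0 Hk0).
    rewrite Hs in H0. pose proof (lsum_eq0_nonneg idx wn Hwn H0 k0 Hk0).
    apply Hck0. rewrite (Rmax_sign_parts (c k0)). unfold wp, wn in *. lra. }
  exists (fun k => 0 < c k), (fun i => lsum idx (fun k => wp k * x k i) / lsum idx wp).
  intros S HS [HP|HnP].
  - apply convex_lsum_comb; auto.
    intros k Hk Hk'. apply HP; auto. unfold wp, Rmax in Hk'. destruct (Rle_dec (c k) 0); lra.
  - replace (fun i => lsum idx (fun k => wp k * x k i) / lsum idx wp)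
      with (fun i => lsum idx (fun k => wn k * x k i) / lsum idx wn)
      by (apply functional_extensionality; intros i; rewrite Hsx, Hs; reflexivity).
    apply convex_lsum_comb; [auto|auto|..|lra].
    intros k Hk Hk'. apply HnP; auto. unfold wn, Rmax in Hk'. destruct (Rle_dec (- c k) 0); lra.
Qed.

Lemma helly {d : nat} (Ls : list (pset d)) :
  (forall S, In S Ls -> convex S) ->
  (forall L, incl L Ls -> (length L <= d + 1)%nat -> common_point L) ->
  common_point Ls.
Proof.
  remember (length Ls) as n eqn:Hn. revert Ls Hn.
  induction n as [n IH] using lt_wf_ind. intros Ls -> Hconv HH.
  set (idx := nodup classic_eq_dec Ls).
  assert (Hidx : forall S, In S idx <-> In S Ls) by (intros; apply nodup_In).
  destruct (Nat.le_gt_cases (length idx) (d + 1)) as [Hsmall|Hbig].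
  - destruct (HH idx) as [x Hx]; [intros S; apply Hidx|auto|].
    exists x. intros S HS. apply Hx, Hidx, HS.
  - (* [xs T] lies in every member other than [T]; a Radon point of the [xs] lies in all. *)
    assert (Hxs : forall T, exists x : point d,
               In T Ls -> forall S, In S (remove classic_eq_dec T Ls) -> S x).
    { intros T. destruct (classic (In T Ls)) as [HT|HT]; [|exists (fun _ => 0); tauto].
      destruct (IH _ (remove_length_lt classic_eq_dec Ls T HT) (remove classic_eq_dec T Ls))
        as [x Hx]; auto.
      - intros S HS. apply Hconv, (in_remove _ _ _ _ HS).
      - intros L HL Hl. apply HH; auto. intros S HS. apply (in_remove _ _ _ _ (HL S HS)).
      - exists x; auto. }
    destruct (choice _ Hxs) as [xs Hxs'].
    destruct (radon idx xs (NoDup_nodup _ _) Hbig) as [P [y Hy]].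
    exists y. intros T HT. apply Hy; [apply Hconv; auto|].
    destruct (classic (P T)) as [HPT|HPT]; [right|left]; intros S HS HPS;
      (apply (Hxs' S (proj1 (Hidx S) HS) T), in_in_remove; [intros ->; contradiction|exact HT]).
Qed.

(** * Sequential compactness *)

Lemma Un_cv_ext (u v : nat -> R) (l : R) : (forall n, u n = v n) -> Un_cv u l -> Un_cv v l.
Proof. intros He H eps Heps. destruct (H eps Heps) as [N HN]. exists N. intros n Hn. rewrite <- He. auto. Qed.

Lemma Un_cv_const (c : R) : Un_cv (fun _ => c) c.
Proof. intros eps Heps. exists O. intros n _. unfold R_dist. rewrite Rminus_diag, Rabs_R0. auto. Qed.

Lemma Un_cv_inv_INR_S : Un_cv (fun n => / (INR n + 1)) 0.
Proof.
  intros eps Heps. destruct (archimed_cor1 eps Heps) as [N [HN HN0]].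
  exists N. intros n Hn. unfold R_dist. rewrite Rminus_0_r.
  assert (HNp : 0 < INR N) by (apply lt_0_INR; auto).
  assert (Hle : INR N <= INR n) by (apply le_INR; lia).
  rewrite Rabs_pos_eq by (apply Rlt_le, Rinv_0_lt_compat; lra).
  apply Rle_lt_trans with (/ INR N); auto.
  apply Rinv_le_contravar; lra.
Qed.

Definition strictly_increasing (phi : nat -> nat) : Prop := forall n, (phi n < phi (S n))%nat.

Lemma strictly_increasing_le phi n m :
  strictly_increasing phi -> (n <= m)%nat -> (phi n <= phi m)%nat.
Proof. intros H Hnm. induction Hnm; auto. specialize (H m). lia. Qed.

Lemma strictly_increasing_id_le phi n : strictly_increasing phi -> (n <= phi n)%nat.
Proof. intros H. induction n; [lia|]. specialize (H n). lia. Qed.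

Lemma strictly_increasing_comp phi psi :
  strictly_increasing phi -> strictly_increasing psi -> strictly_increasing (fun n => phi (psi n)).
Proof.
  intros Hphi Hpsi n. specialize (Hpsi n).
  pose proof (strictly_increasing_le phi (S (psi n)) (psi (S n)) Hphi Hpsi). specialize (Hphi (psi n)). lia.
Qed.

Lemma Un_cv_subseq (u : nat -> R) (l : R) phi :
  strictly_increasing phi -> Un_cv u l -> Un_cv (fun n => u (phi n)) l.
Proof.
  intros Hphi H eps Heps. destruct (H eps Heps) as [N HN]. exists N. intros n Hn.
  apply HN. pose proof (strictly_increasing_id_le phi n Hphi). lia.
Qed.

Lemma bounded_seq_cv_subseq (u : nat -> R) (M : R) : (forall n, Rabs (u n) <= M) ->
  exists phi l, strictly_increasing phi /\ Un_cv (fun n => u (phi n)) l.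
Proof.
  intros Hb.
  destruct (Rtopology.Bolzano_Weierstrass u (fun c => -M <= c <= M) (Rtopology.compact_P3 (-M) M)) as [l Hl].
  { intros n. specialize (Hb n). unfold Rabs in Hb; destruct (Rcase_abs (u n)); lra. }
  assert (Hg : forall N n, exists p, (N <= p)%nat /\ Rabs (u p - l) < / (INR n + 1)).
  { intros N n. assert (Hp : 0 < / (INR n + 1)) by (apply Rinv_0_lt_compat; pose proof (pos_INR n); lra).
    destruct (Hl (Rtopology.disc l (mkposreal _ Hp)) N) as [p [Hp1 Hp2]].
    { exists (mkposreal _ Hp). intros y Hy; exact Hy. }
    exists p; split; auto. }
  destruct (choice (fun Nn p => (fst Nn <= p)%nat /\ Rabs (u p - l) < / (INR (snd Nn) + 1)))
    as [g Hgp]; [intros [N n]; apply Hg|].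
  set (phi := fix f (n : nat) : nat := match n with O => g (O, O) | S m => g (S (f m), S m) end).
  assert (Hphi : forall n, Rabs (u (phi n) - l) < / (INR n + 1)) by (intros [|n]; apply (Hgp (_, _))).
  exists phi, l. split.
  - intros n. exact (proj1 (Hgp (S (phi n), S n))).
  - intros eps Heps. destruct (Un_cv_inv_INR_S eps Heps) as [N HN]. exists N. intros n Hn.
    specialize (HN n Hn). unfold R_dist in *. rewrite Rminus_0_r in HN.
    pose proof (Hphi n). pose proof (Rle_abs (/ (INR n + 1))). lra.
Qed.

Lemma bounded_point_seq_cv_subseq {d : nat} (u : nat -> point d) (M : R) :
  (forall n i, Rabs (u n i) <= M) ->
  exists phi (z : point d), strictly_increasing phi /\ forall i, Un_cv (fun n => u (phi n) i) (z i).
Proof.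
  intros Hb.
  assert (Hcoords : forall js : list (Fin.t d), exists phi (z : point d),
    strictly_increasing phi /\ forall i, In i js -> Un_cv (fun n => u (phi n) i) (z i)).
  { induction js as [|j js [phi [z [Hphi Hz]]]].
    - exists (fun n => n), (fun _ => 0). split; [intros n; lia|intros i []].
    - destruct (bounded_seq_cv_subseq (fun n => u (phi n) j) M (fun n => Hb _ _)) as [psi [a [Hpsi Ha]]].
      exists (fun n => phi (psi n)), (fun i => if Fin.eq_dec i j then a else z i). split.
      + apply strictly_increasing_comp; auto.
      + intros i Hi. destruct (Fin.eq_dec i j) as [->|Hne]; auto.
        destruct Hi as [Hi|Hi]; [congruence|].
        apply (Un_cv_subseq (fun n => u (phi n) i)); auto. }
  destruct (Hcoords (allfin d)) as [phi [z [H1 H2]]].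
  exists phi, z. split; auto. intros i; apply H2, allfin_In.
Qed.

Lemma closed_bounded_min_coord {d : nat} (Q : pset d) (M : R) (j : Fin.t d) (a : R) :
  closed Q -> (forall x, Q x -> forall i, Rabs (x i) <= M) -> (exists x, Q x) ->
  exists z, Q z /\ forall y, Q y -> a * z j <= a * y j.
Proof.
  intros Hcl Hb [x0 Hx0].
  set (E := fun r => exists y, Q y /\ r = - (a * y j)).
  assert (HbE : bound E).
  { exists (Rabs a * M). intros r [y [Hy ->]].
    apply Rle_trans with (Rabs (a * y j)).
    - rewrite <- Rabs_Ropp. apply Rle_abs.
    - rewrite Rabs_mult. apply Rmult_le_compat_l; [apply Rabs_pos|apply Hb; auto]. }
  destruct (completeness E HbE (ex_intro _ _ (ex_intro _ x0 (conj Hx0 eq_refl)))) as [m [Hub Hlub]].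
  assert (Hy : forall n, exists y, Q y /\ m - / (INR n + 1) < - (a * y j)).
  { intros n. apply NNPP. intros Hn.
    assert (Hp : 0 < / (INR n + 1)) by (apply Rinv_0_lt_compat; pose proof (pos_INR n); lra).
    assert (Hup : is_upper_bound E (m - / (INR n + 1))).
    { intros r [y [HQ ->]]. apply Rnot_lt_le. intros Hlt. apply Hn. exists y; auto. }
    specialize (Hlub _ Hup). lra. }
  destruct (choice _ Hy) as [ys Hys].
  destruct (bounded_point_seq_cv_subseq ys M (fun n i => Hb _ (proj1 (Hys n)) i)) as [phi [z [Hphi Hz]]].
  assert (HQz : Q z) by (apply (Hcl (fun n => ys (phi n))); auto; intros; apply Hys).
  exists z. split; auto.
  assert (Hmz : m <= - (a * z j)).
  { apply Rle_cv_lim with (Un := fun n => m - / (INR n + 1)) (Vn := fun n => - (a * ys (phi n) j)).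
    - intros n. pose proof (proj2 (Hys (phi n))).
      pose proof (strictly_increasing_id_le phi n Hphi) as Hge.
      assert (/ (INR (phi n) + 1) <= / (INR n + 1)).
      { apply Rinv_le_contravar; [pose proof (pos_INR n); lra|]. apply le_INR in Hge. lra. }
      lra.
    - pose proof (CV_minus _ _ m 0 (Un_cv_const m) Un_cv_inv_INR_S) as H. rewrite Rminus_0_r in H. exact H.
    - apply (Un_cv_ext (opp_seq (fun n => a * ys (phi n) j))); [intros; reflexivity|].
      apply CV_opp. apply (CV_mult (fun _ => a)); [apply Un_cv_const|apply Hz]. }
  intros y HQy. assert (Hr : E (- (a * y j))) by (exists y; auto).
  specialize (Hub _ Hr). lra.
Qed.

Lemma convex_coord_between {d : nat} (Q : pset d) (a b : point d) (j : Fin.t d) (tau : R) :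
  convex Q -> Q a -> Q b -> a j <= tau <= b j -> exists x, Q x /\ x j = tau.
Proof.
  intros Hc Ha Hb Htau.
  destruct (Req_dec (a j) (b j)) as [Heq|Hne]; [exists a; split; auto; lra|].
  set (s := (tau - a j) / (b j - a j)).
  exists (fun i => s * b i + (1 - s) * a i). split.
  - apply Hc; auto. unfold s. split.
    + apply Rmult_le_pos; [lra|]. left; apply Rinv_0_lt_compat; lra.
    + apply Rmult_le_reg_r with (b j - a j); [lra|]. field_simplify; lra.
  - unfold s. field. lra.
Qed.

Definition box {d : nat} (M : R) : pset d := fun x => forall i, Rabs (x i) <= M.

Lemma box_convex {d : nat} (M : R) : convex (@box d M).
Proof.
  intros x y t Hx Hy Ht i. specialize (Hx i). specialize (Hy i).
  apply Rle_trans with (Rabs (t * x i) + Rabs ((1 - t) * y i)); [apply Rabs_triang|].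
  rewrite !Rabs_mult, (Rabs_pos_eq t), (Rabs_pos_eq (1 - t)) by lra. nra.
Qed.

Lemma box_closed {d : nat} (M : R) : closed (@box d M).
Proof.
  intros u x Hu Hcv i. apply Rabs_le. split.
  - apply Rle_cv_lim with (Un := fun _ => - M) (Vn := fun n => u n i); auto.
    + intros n. specialize (Hu n i). unfold Rabs in Hu. destruct Rcase_abs; lra.
    + apply Un_cv_const.
  - apply Rle_cv_lim with (Un := fun n => u n i) (Vn := fun _ => M); auto.
    + intros n. specialize (Hu n i). unfold Rabs in Hu. destruct Rcase_abs; lra.
    + apply Un_cv_const.
Qed.

(** * Finite intersection property in a box *)

Definition slice {d : nat} (t : point d) (js : list (Fin.t d)) : pset d :=
  fun x => forall i, In i js -> x i = t i.

Definition slice_cap {d : nat} (M : R) (t : point d) (js : list (Fin.t d)) (L : list (pset d)) : pset d :=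
  fun x => box M x /\ slice t js x /\ forall S, In S L -> S x.

Lemma slice_cap_closed {d : nat} M t js (L : list (pset d)) :
  (forall S, In S L -> closed S) -> closed (slice_cap M t js L).
Proof.
  intros HL u x Hu Hcv. split; [|split].
  - apply (box_closed M u x (fun n => proj1 (Hu n)) Hcv).
  - intros i Hi. apply (UL_sequence (fun n => u n i)); auto.
    apply (Un_cv_ext (fun _ => t i)); [|apply Un_cv_const].
    intros n. symmetry. apply (proj1 (proj2 (Hu n))); auto.
  - intros S HS. apply (HL S HS u x); auto. intros n; apply (proj2 (proj2 (Hu n))); auto.
Qed.

Lemma slice_cap_convex {d : nat} M t js (L : list (pset d)) :
  (forall S, In S L -> convex S) -> convex (slice_cap M t js L).
Proof.
  intros HL x y s [Hx1 [Hx2 Hx3]] [Hy1 [Hy2 Hy3]] Hs. split; [|split].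
  - apply box_convex; auto.
  - intros i Hi. rewrite (Hx2 i Hi), (Hy2 i Hi). ring.
  - intros S HS. apply (HL S HS); [apply Hx3|apply Hy3|]; auto.
Qed.

Section FiniteIntersection.

Context {d : nat} (Phi : pfamily d) (M : R).
Hypothesis Phi_closed_convex : forall S, Phi S -> closed S /\ convex S.

Definition finite_subfamily (L : list (pset d)) : Prop := forall S, In S L -> Phi S.

Definition coords_fixed (t : point d) (js : list (Fin.t d)) : Prop :=
  forall L, finite_subfamily L -> exists x, slice_cap M t js L x.

(* The next coordinate is fixed to the supremum over finite subfamilies of the least value it takes. *)
Lemma coords_fixed_cons (t : point d) js j :
  coords_fixed t js -> exists t', coords_fixed t' (j :: js).
Proof.
  intros Ht.
  set (E := fun a => exists L, finite_subfamily L /\ forall x, slice_cap M t js L x -> a <= x j).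
  assert (HbE : bound E).
  { exists M. intros a [L [HL Ha]]. destruct (Ht L HL) as [x Hx].
    specialize (Ha x Hx). pose proof (proj1 Hx j). pose proof (Rle_abs (x j)). lra. }
  assert (HE : exists a, E a).
  { exists (- M), []. split; [intros S []|]. intros x Hx.
    pose proof (proj1 Hx j). unfold Rabs in H. destruct Rcase_abs; lra. }
  destruct (completeness E HbE HE) as [tau [Hub Hlub]].
  exists (fun i => if Fin.eq_dec i j then tau else t i).
  intros L HL.
  assert (Hcl : closed (slice_cap M t js L))
    by (apply slice_cap_closed; intros S HS; apply (proj1 (Phi_closed_convex S (HL S HS)))).
  assert (Hbd : forall x, slice_cap M t js L x -> forall i, Rabs (x i) <= M) by (intros x Hx; apply (proj1 Hx)).
  destruct (closed_bounded_min_coord _ M j 1 Hcl Hbd (Ht L HL)) as [zmin [Hzmin Hmin]].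
  destruct (closed_bounded_min_coord _ M j (-1) Hcl Hbd (Ht L HL)) as [zmax [Hzmax Hmax]].
  assert (H1 : zmin j <= tau).
  { apply Hub. exists L. split; auto. intros x Hx. specialize (Hmin x Hx). lra. }
  assert (H2 : tau <= zmax j).
  { apply Hlub. intros a [L' [HL' Ha]].
    destruct (Ht (L' ++ L)) as [x [Hx1 [Hx2 Hx3]]].
    { intros S HS. apply in_app_or in HS as [HS|HS]; auto. }
    specialize (Ha x (conj Hx1 (conj Hx2 (fun S HS => Hx3 S (in_or_app _ _ _ (or_introl HS)))))).
    specialize (Hmax x (conj Hx1 (conj Hx2 (fun S HS => Hx3 S (in_or_app _ _ _ (or_intror HS)))))).
    lra. }
  destruct (convex_coord_between (slice_cap M t js L) zmin zmax j tau) as [x [[Hx1 [Hx2 Hx3]] Hxj]]; auto.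
  { apply slice_cap_convex. intros S HS. apply (proj2 (Phi_closed_convex S (HL S HS))). }
  exists x. split; [auto|split; [|auto]].
  intros i Hi. destruct (Fin.eq_dec i j) as [->|Hne]; auto.
  destruct Hi as [Hi|Hi]; [congruence|]. auto.
Qed.

Lemma closed_convex_finite_intersection :
  (forall L, finite_subfamily L -> exists x, box M x /\ forall S, In S L -> S x) ->
  exists x, forall S, Phi S -> S x.
Proof.
  intros Hfin.
  assert (Hall : forall js, exists t, coords_fixed t js).
  { induction js as [|j js [t Ht]]; [|apply (coords_fixed_cons t); auto].
    exists (fun _ => 0). intros L HL. destruct (Hfin L HL) as [x [H1 H2]].
    exists x. split; [auto|split; [intros i []|auto]]. }
  destruct (Hall (allfin d)) as [t Ht]. exists t. intros S HS.
  destruct (Ht [S]) as [x [_ [Hx2 Hx3]]]; [intros S' [<-|[]]; auto|].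
  replace t with x by (apply functional_extensionality; intros i; apply Hx2, allfin_In).
  apply Hx3. left; auto.
Qed.

End FiniteIntersection.

(** * The (p,q) argument *)

Lemma list_split_by {A : Type} (P : A -> Prop) (L : list A) : exists L1 L2,
  Permutation L (L1 ++ L2) /\ (forall a, In a L1 -> P a) /\ (forall a, In a L2 -> ~ P a).
Proof.
  induction L as [|a L [L1 [L2 [Hp [H1 H2]]]]].
  - exists [], []. repeat split; auto; intros a [].
  - destruct (classic (P a)) as [Ha|Ha].
    + exists (a :: L1), L2. split; [constructor; auto|]. split; auto.
      intros b [<-|Hb]; auto.
    + exists L1, (a :: L2). split.
      * eapply perm_trans; [apply perm_skip, Hp|]. apply Permutation_middle.
      * split; auto. intros b [<-|Hb]; auto.
Qed.

Lemma infinite_family_extend {d : nat} (G : pfamily d) (avoid L : list (pset d)) (k : nat) :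
  infinite_family G -> NoDup L ->
  exists E, length E = k /\ NoDup (E ++ L) /\ forall S, In S E -> G S /\ ~ In S avoid.
Proof.
  intros Hinf HL.
  assert (Hfresh : forall L', exists S, G S /\ ~ In S L').
  { intros L'. apply NNPP. intros Hn. apply Hinf. exists L'. intros S HS.
    apply NNPP. intros HnS. apply Hn. exists S; auto. }
  induction k as [|k [E [HEl [HEn HEG]]]].
  - exists []. repeat split; auto; contradiction.
  - destruct (Hfresh (E ++ L ++ avoid)) as [S [HS HnS]].
    exists (S :: E). split; [simpl; auto|split].
    + constructor; auto. intros Hin. apply HnS. rewrite app_assoc. apply in_or_app; auto.
    + intros S' [<-|HS']; auto. split; auto. intros Hin. apply HnS, in_or_app. right; apply in_or_app; auto.
Qed.

(* Extending [L] to [n] distinct members of [G] reduces the claim to the (n,n)-property. *)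
Lemma pq_nn_common_point {d : nat} (n : nat) (G : pfamily d) (L : list (pset d)) :
  infinite_family G -> pq_property n n G ->
  (forall S, In S L -> G S) -> (length L <= n)%nat -> common_point L.
Proof.
  intros Hinf [_ Hpq] HG Hl.
  set (L0 := nodup classic_eq_dec L).
  assert (HL0 : forall S, In S L0 <-> In S L) by (intros; apply nodup_In).
  assert (Hl0 : (length L0 <= length L)%nat)
    by (apply NoDup_incl_length; [apply NoDup_nodup|intros S; apply HL0]).
  destruct (infinite_family_extend G [] L0 (n - length L0) Hinf (NoDup_nodup _ _)) as [E [HEl [HEn HEG]]].
  destruct (Hpq (E ++ L0)) as [L' [Hn' [Hl' [Hi' [x Hx]]]]].
  - split; auto. intros S HS. apply in_app_or in HS as [HS|HS]; [apply HEG|apply HG, HL0]; auto.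
  - rewrite length_app. lia.
  - exists x. intros S HS. apply Hx.
    apply (NoDup_length_incl (l' := E ++ L0) Hn'); [rewrite length_app; lia|auto|].
    apply in_or_app; right; apply HL0; auto.
Qed.

Lemma m_free_common_point_length {d : nat} (m : nat) (B : pfamily d) (L : list (pset d)) :
  m_free m B -> members B L -> common_point L -> (length L <= m)%nat.
Proof.
  intros [_ Hfree] [Hnd HB] [x Hx].
  destruct (Nat.le_gt_cases (length L) m) as [Hle|Hgt]; auto. exfalso.
  pose proof (firstn_skipn (m + 1) L) as Hsplit.
  assert (Hincl : incl (firstn (m + 1) L) L)
    by (intros S HS; rewrite <- Hsplit; apply in_or_app; left; exact HS).
  apply (Hfree (firstn (m + 1) L)).
  - split; [rewrite <- Hsplit in Hnd; eapply NoDup_app_remove_r; eauto|].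
    intros S HS. apply HB, Hincl, HS.
  - apply firstn_length_le. lia.
  - exists x. intros S HS. apply Hx, Hincl, HS.
Qed.

(* Among [q] members of [Bl ++ Fl] with a common point, at most [q - k] come from the
   [(q - k)]-free family, so all [k] members of [Fl] and at least one of [Bl] occur. *)
Lemma pq_free_union_common_point {d : nat} (p q k : nat) (F B : pfamily d) (Bl Fl : list (pset d)) :
  (k + 1 <= q)%nat -> m_free (q - k) B -> pq_property p q (family_union F B) ->
  members B Bl -> members F Fl -> (forall S, In S Bl -> ~ In S Fl) ->
  length Fl = k -> (length Bl + k = p)%nat ->
  exists x, (exists S, In S Bl /\ S x) /\ forall S, In S Fl -> S x.
Proof.
  intros Hqk Hfree [_ Hpq] [HBn HBl] [HFn HFl] Hdisj HFk HBk.
  destruct (Hpq (Bl ++ Fl)) as [L' [Hn' [Hl' [Hi' [x Hx]]]]].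
  { split; [apply NoDup_app; auto|].
    intros S HS. apply in_app_or in HS as [HS|HS]; [right|left]; auto. }
  { rewrite length_app. lia. }
  destruct (list_split_by (fun S => In S Bl) L') as [L1 [L2 [Hp [H1 H2]]]].
  assert (Hn12 : NoDup (L1 ++ L2)) by (eapply Permutation_NoDup; eauto).
  assert (HinL' : forall S, In S (L1 ++ L2) -> In S L') by (intros S; apply Permutation_in, Permutation_sym, Hp).
  assert (Hlen : (length L1 + length L2 = q)%nat)
    by (rewrite <- length_app, <- (Permutation_length Hp); auto).
  assert (Hl1 : (length L1 <= q - k)%nat).
  { apply (m_free_common_point_length _ B); auto.
    - split; [eapply NoDup_app_remove_r; eauto|]. intros S HS. apply HBl, H1, HS.
    - exists x. intros S HS. apply Hx, HinL', in_or_app; auto. }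
  assert (Hi2 : incl L2 Fl).
  { intros S HS. destruct (in_app_or _ _ _ (Hi' S (HinL' S (in_or_app _ _ _ (or_intror HS))))); auto.
    exfalso; apply (H2 S); auto. }
  assert (Hl2 : (length L2 <= k)%nat)
    by (rewrite <- HFk; apply NoDup_incl_length; [eapply NoDup_app_remove_l|]; eauto).
  assert (HFl2 : incl Fl L2) by (apply NoDup_length_incl; [eapply NoDup_app_remove_l; eauto|lia|auto]).
  destruct L1 as [|S1 L1]; [simpl in Hlen; lia|].
  exists x. split.
  - exists S1. split; [apply H1; left; auto|]. apply Hx, HinL'. left; auto.
  - intros S HS. apply Hx, HinL', in_or_app. right. apply HFl2, HS.
Qed.

Lemma members_meet_free_family {d : nat} (p q k : nat) (F B : pfamily d) (L : list (pset d)) :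
  (k + 1 <= q)%nat -> (q <= p)%nat ->
  infinite_family F -> pq_property (k + 1) (k + 1) F ->
  m_free (q - k) B -> has_card (p - k) B -> pq_property p q (family_union F B) ->
  (forall S, In S L -> F S) -> (length L <= k)%nat ->
  exists x, (exists S, B S /\ S x) /\ forall S, In S L -> S x.
Proof.
  intros Hqk Hpq HFinf HFpq HBfree [Bl [HBn [HBl HBiff]]] Hunion HL Hl.
  destruct (classic (exists S, In S L /\ B S)) as [[S0 [HS0 HBS0]]|HnB].
  - destruct (pq_nn_common_point (k + 1) F L) as [x Hx]; auto; [lia|].
    exists x. split; [exists S0; split; [|apply Hx]|]; auto.
  - set (L0 := nodup classic_eq_dec L).
    assert (HL0 : forall S, In S L0 <-> In S L) by (intros; apply nodup_In).
    assert (Hl0 : (length L0 <= length L)%nat)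
      by (apply NoDup_incl_length; [apply NoDup_nodup|intros S; apply HL0]).
    destruct (infinite_family_extend F Bl L0 (k - length L0) HFinf (NoDup_nodup _ _))
      as [E [HEl [HEn HEF]]].
    destruct (pq_free_union_common_point p q k F B Bl (E ++ L0)) as [x [[S [HS HSx]] Hx]]; auto.
    + split; auto. intros S HS. apply HBiff, HS.
    + split; auto. intros S HS. apply in_app_or in HS as [HS|HS]; [apply HEF|apply HL, HL0]; auto.
    + intros S HSB HS. apply in_app_or in HS as [HS|HS]; [apply (HEF S HS), HSB|].
      apply HnB. exists S. split; [apply HL0, HS|apply HBiff, HSB].
    + rewrite length_app. lia.
    + lia.
    + exists x. split; [exists S; split; [apply HBiff|]; auto|].
      intros S' HS'. apply Hx, in_or_app. right. apply HL0, HS'.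
Qed.

Lemma finite_bounded_family_in_box {d : nat} (n : nat) (B : pfamily d) :
  (forall S, B S -> Defs.bounded S) -> has_card n B ->
  exists M, forall S, B S -> forall x, S x -> box M x.
Proof.
  intros Hb [Bl [_ [_ HBiff]]].
  assert (Hlist : forall l : list (pset d), (forall S, In S l -> Defs.bounded S) ->
            exists M, forall S, In S l -> forall x, S x -> box M x).
  { induction l as [|S0 l IH]; intros H.
    - exists 0. intros S [].
    - destruct IH as [M HM]; [intros; apply H; right; auto|].
      destruct (H S0 (or_introl eq_refl)) as [M0 HM0].
      exists (Rmax M M0). intros S [<-|HS] x Hx i.
      + eapply Rle_trans; [apply HM0; auto|apply Rmax_r].
      + eapply Rle_trans; [apply (HM S HS x Hx)|apply Rmax_l]. }
  destruct (Hlist Bl) as [M HM]; [intros S HS; apply Hb, HBiff, HS|].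
  exists M. intros S HS. apply HM, HBiff, HS.
Qed.

Lemma helly_in_box {d : nat} (F : pfamily d) (M : R) :
  (forall S, F S -> convex S) ->
  (forall L, (forall S, In S L -> F S) -> (length L <= d + 1)%nat -> common_point L) ->
  (forall L, (forall S, In S L -> F S) -> (length L <= d)%nat ->
     exists x, box M x /\ forall S, In S L -> S x) ->
  forall L, (forall S, In S L -> F S) -> exists x, box M x /\ forall S, In S L -> S x.
Proof.
  intros Hconv Hsmall Hbox L HL.
  destruct (helly (box M :: L)) as [x Hx].
  - intros S [<-|HS]; [apply box_convex|apply Hconv, HL, HS].
  - intros L' Hi' Hl'.
    set (L2 := remove classic_eq_dec (box M) L').
    assert (HL2 : forall S, In S L2 -> F S).
    { intros S HS. destruct (in_remove _ _ _ _ HS) as [HS' Hne].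
      destruct (Hi' S HS') as [Heq|HSL]; [congruence|apply HL, HSL]. }
    assert (HL' : forall S, In S L' -> S = box M \/ In S L2).
    { intros S HS. destruct (classic_eq_dec S (box M)) as [|Hne]; [left|right; apply in_in_remove]; auto. }
    destruct (classic (In (box M) L')) as [Hb|Hb].
    + destruct (Hbox L2 HL2) as [x [Hxb Hx]].
      { unfold L2. pose proof (remove_length_lt classic_eq_dec L' (box M) Hb). lia. }
      exists x. intros S HS. destruct (HL' S HS) as [->|HS2]; [exact Hxb|apply Hx, HS2].
    + destruct (Hsmall L2 HL2) as [x Hx].
      { unfold L2. pose proof (remove_length_le classic_eq_dec L' (box M)). lia. }
      exists x. intros S HS. destruct (HL' S HS) as [->|HS2]; [contradiction|apply Hx, HS2].
  - exists x. split; [apply Hx; left; auto|]. intros S HS; apply Hx; right; auto.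
Qed.

Theorem lemma3p2 (d p q : nat) (hp : (1 <= p)%nat) (hq : (1 <= q)%nat)
  (hpq : (q <= p)%nat) (hqd : (d + 1 <= q)%nat)
  (F B : pfamily d)
  (hFinf : infinite_family F)
  (hFcc : forall S, F S -> closed S /\ convex S)
  (hFprop : pq_property (d + 1) (d + 1) F)
  (hBfree : m_free (q - d) B)
  (hBcard : has_card (p - d) B)
  (hunion : pq_property p q (family_union F B)) :
  exists x : point d, forall S, F S -> S x.
Proof.
  destruct (finite_bounded_family_in_box (p - d) B) as [M HM]; auto.
  { intros S HS. apply (proj1 hBfree S HS). }
  apply (closed_convex_finite_intersection F M hFcc).
  apply helly_in_box.
  - intros S HS. apply (hFcc S HS).
  - intros L HL Hl. apply (pq_nn_common_point (d + 1) F); auto.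
  - intros L HL Hl.
    destruct (members_meet_free_family p q d F B L) as [x [[S [HBS HSx]] Hx]]; auto.
    exists x. split; [apply (HM S HBS x HSx)|auto].
Qed.
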